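(* In the algorithm described in the context, only four types of messages are used, namely $\textsc{write0}(v)$, $\textsc{write1}(v)$, $\textsc{read}()$ and $\textsc{proceed}()$, and no message carries control information beyond its type. Moreover, a read operation requires $O(n)$ messages and a write operation requires $O(n^2)$ messages.
   Context: Model. There are $n$ asynchronous processes $p_1,\dots,p_n$, of which up to $t<n/2$ may crash. Every ordered pair of processes is connected by a reliable, asynchronous, not necessarily FIFO channel. One process $p_w$ is the single writer; the initial register value is $v_0$. The notation $\textsc{write}(b,v)$ stands for $\textsc{write0}(v)$ if $b=0$ and for $\textsc{write1}(v)$ if $b=1$. Local variables of $p_i$. These are: an array $history_i$ with $history_i[0]=v_0$; an integer array $w\_sync_i[1..n]$, initially all $0$; and an integer array $r\_sync_i[1..n]$, initially all $0$. $\mathsf{write}(v)$, executed by $p_w$: (1) $wsn\gets w\_sync_w[w]+1$; $w\_sync_w[w]\gets wsn$; $history_w[wsn]\gets v$; $b\gets wsn\bmod 2$. (2) For each $j$ with $w\_sync_w[j]=wsn-1$, send $\textsc{write}(b,v)$ to $p_j$. (3) Wait until at least $n-t$ indices $j$ satisfy $w\_sync_w[j]=wsn$. (4) Return. $\mathsf{read}()$, executed by $p_i$: (5) $r\_sync_i[i]\gets r\_sync_i[i]+1$, and let $rsn$ denote this new value. (6) Send $\textsc{read}()$ to every $p_j$ with $j\ne i$. (7) Wait until at least $n-t$ indices $j$ satisfy $r\_sync_i[j]=rsn$. (8) $sn\gets w\_sync_i[i]$. (9) Wait until at least $n-t$ indices $j$ satisfy $w\_sync_i[j]\ge sn$. (10)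 Return $history_i[sn]$. On receipt of $\textsc{write}(b,v)$ from $p_j$, process $p_i$ executes: (i) Wait until $b=(w\_sync_i[j]+1)\bmod 2$. (ii) $wsn\gets w\_sync_i[j]+1$. (iii) If $wsn=w\_sync_i[i]+1$: set $w\_sync_i[i]\gets wsn$ and $history_i[wsn]\gets v$, then for each $\ell$ with $w\_sync_i[\ell]=wsn-1$, send $\textsc{write}(wsn\bmod 2,v)$ to $p_\ell$. (iv) Otherwise, if $wsn<w\_sync_i[i]$, send $\textsc{write}((wsn+1)\bmod 2, history_i[wsn+1])$ to $p_j$. (v) $w\_sync_i[j]\gets wsn$. On receipt of $\textsc{read}()$ from $p_j$, process $p_i$ executes: (i) $sn\gets w\_sync_i[i]$. (ii) Wait until $w\_sync_i[j]\ge sn$. (iii) Send $\textsc{proceed}()$ to $p_j$. On receipt of $\textsc{proceed}()$ from $p_j$, process $p_i$ sets $r\_sync_i[j]\gets r\_sync_i[j]+1$. *)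

(* Operational model of the single-writer register
   algorithm of the paper, with ghost information (message tags and a log
   of all messages ever sent) used only to attribute messages to operations. *)
From mathcomp Require Import all_boot.
Set Implicit Arguments. Unset Strict Implicit. Unset Printing Implicit Defensive.

Section Model.
Variables (V : Type) (n : nat).

Inductive msg := MWrite0 of V | MWrite1 of V | MRead | MProceed.

Definition mkwrite (b : bool) (v : V) : msg := if b then MWrite1 v else MWrite0 v.

(* Ghost tag: the operation a message is attributed to.
   TWrite k  : the k-th write of p_w (sequence number k);
   TRead i r : the r-th read invoked by p_i. *)
Inductive tag := TWrite of nat | TRead of 'I_n & nat.

Record packet := Pkt { psrc : 'I_n; pdst : 'I_n; pmsg : msg; ptag : tag }.

Inductive opst :=
  | Idle
  | WWait of nat         (* write: waiting at line (3) for sequence number wsn *)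
  | RWait1 of nat        (* read: waiting at line (7) for rsn *)
  | RWait2 of nat.       (* read: waiting at line (9) for sn *)

(* Pending (blocked) message handlers. *)
Inductive task :=
  | PWrite of 'I_n & bool & V      (* WRITE(b,v) from j, waiting at (i) *)
  | PRead of 'I_n & nat & tag.     (* READ() from j, sn read at (i), waiting at (ii) *)

Record lstate := LState {
  hist : nat -> V;
  wsync : 'I_n -> nat;
  rsync : 'I_n -> nat;
  op : opst;
  pend : seq task;
  crashed : bool }.

Record gstate := GState {
  loc : 'I_n -> lstate;
  net : seq packet;        (* messages in transit (unordered: non-FIFO) *)
  sent : seq packet }.     (* ghost log of all messages ever sent *)

Definition upd {A : Type} (f : 'I_n -> A) (i : 'I_n) (x : A) : 'I_n -> A :=
  fun j => if j == i then x else f j.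
Definition updn {A : Type} (f : nat -> A) (k : nat) (x : A) : nat -> A :=
  fun m => if m == k then x else f m.

Definition set_hist l h := LState h (wsync l) (rsync l) (op l) (pend l) (crashed l).
Definition set_wsync l f := LState (hist l) f (rsync l) (op l) (pend l) (crashed l).
Definition set_rsync l f := LState (hist l) (wsync l) f (op l) (pend l) (crashed l).
Definition set_op l o := LState (hist l) (wsync l) (rsync l) o (pend l) (crashed l).
Definition set_pend l p := LState (hist l) (wsync l) (rsync l) (op l) p (crashed l).
Definition set_crashed l c := LState (hist l) (wsync l) (rsync l) (op l) (pend l) c.

Definition set_loc (s : gstate) i l := GState (upd (loc s) i l) (net s) (sent s).
Definition send (s : gstate) (ps : seq packet) :=
  GState (loc s) (net s ++ ps) (sent s ++ ps).

(* Lines (1)-(2) of write(v), executed by p_w. *)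
Definition write_start (w : 'I_n) (l : lstate) (v : V) : lstate * seq packet :=
  let wsn := (wsync l w).+1 in
  let l1 := set_op (set_hist (set_wsync l (upd (wsync l) w wsn)) (updn (hist l) wsn v))
                   (WWait wsn) in
  (l1, [seq Pkt w j (mkwrite (odd wsn) v) (TWrite wsn)
          | j <- enum 'I_n & wsync l1 j == wsn.-1]).

(* Lines (5)-(6) of read(), executed by p_i. *)
Definition read_start (i : 'I_n) (l : lstate) : lstate * seq packet :=
  let rsn := (rsync l i).+1 in
  (set_op (set_rsync l (upd (rsync l) i rsn)) (RWait1 rsn),
   [seq Pkt i j MRead (TRead i rsn) | j <- enum 'I_n & j != i]).

(* Steps (ii)-(v) of the WRITE(b,v) handler at p_i for a message from p_j. *)
Definition write_body (i j : 'I_n) (v : V) (l : lstate) : lstate * seq packet :=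
  let wsn := (wsync l j).+1 in
  if wsn == (wsync l i).+1 then
    let l1 := set_hist (set_wsync l (upd (wsync l) i wsn)) (updn (hist l) wsn v) in
    (set_wsync l1 (upd (wsync l1) j wsn),
     [seq Pkt i m (mkwrite (odd wsn) v) (TWrite wsn)
        | m <- enum 'I_n & wsync l1 m == wsn.-1])
  else if wsn < wsync l i then
    (set_wsync l (upd (wsync l) j wsn),
     [:: Pkt i j (mkwrite (odd wsn.+1) (hist l wsn.+1)) (TWrite wsn.+1)])
  else (set_wsync l (upd (wsync l) j wsn), [::]).

(* Receipt of a message (the non-blocking prefix of each handler). *)
Definition receive (i : 'I_n) (p : packet) (l : lstate) : lstate :=
  match pmsg p with
  | MWrite0 v => set_pend l (rcons (pend l) (PWrite (psrc p) false v))
  | MWrite1 v => set_pend l (rcons (pend l) (PWrite (psrc p) true v))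
  | MRead => set_pend l (rcons (pend l) (PRead (psrc p) (wsync l i) (ptag p)))
  | MProceed => set_rsync l (upd (rsync l) (psrc p) (rsync l (psrc p)).+1)
  end.

Definition init_lstate (v0 : V) : lstate :=
  LState (fun _ => v0) (fun _ => 0) (fun _ => 0) Idle [::] false.
Definition init_state (v0 : V) : gstate := GState (fun _ => init_lstate v0) [::] [::].

(* One atomic step of the system; t = maximal number of crashes, w = writer. *)
Inductive step (t : nat) (w : 'I_n) : gstate -> gstate -> Prop :=
  | StWriteStart s v :
      ~~ crashed (loc s w) -> op (loc s w) = Idle ->
      step t w s (send (set_loc s w (write_start w (loc s w) v).1)
                       (write_start w (loc s w) v).2)
  | StWriteEnd s wsn :
      ~~ crashed (loc s w) -> op (loc s w) = WWait wsn ->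
      n - t <= #|[pred j | wsync (loc s w) j == wsn]| ->
      step t w s (set_loc s w (set_op (loc s w) Idle))
  | StReadStart s i :
      ~~ crashed (loc s i) -> op (loc s i) = Idle ->
      step t w s (send (set_loc s i (read_start i (loc s i)).1)
                       (read_start i (loc s i)).2)
  | StReadMid s i rsn :
      ~~ crashed (loc s i) -> op (loc s i) = RWait1 rsn ->
      n - t <= #|[pred j | rsync (loc s i) j == rsn]| ->
      step t w s (set_loc s i (set_op (loc s i) (RWait2 (wsync (loc s i) i))))
  | StReadEnd s i sn :
      ~~ crashed (loc s i) -> op (loc s i) = RWait2 sn ->
      n - t <= #|[pred j | sn <= wsync (loc s i) j]| ->
      step t w s (set_loc s i (set_op (loc s i) Idle))
  | StDeliver s q1 p q2 :
      net s = q1 ++ p :: q2 -> ~~ crashed (loc s (pdst p)) ->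
      step t w s (GState (upd (loc s) (pdst p) (receive (pdst p) p (loc s (pdst p))))
                         (q1 ++ q2) (sent s))
  | StHandleWrite s i p1 j b v p2 :
      ~~ crashed (loc s i) -> pend (loc s i) = p1 ++ PWrite j b v :: p2 ->
      b = odd (wsync (loc s i) j).+1 ->
      step t w s (send (set_loc s i
                          (write_body i j v (set_pend (loc s i) (p1 ++ p2))).1)
                       (write_body i j v (set_pend (loc s i) (p1 ++ p2))).2)
  | StHandleRead s i p1 j sn tg p2 :
      ~~ crashed (loc s i) -> pend (loc s i) = p1 ++ PRead j sn tg :: p2 ->
      sn <= wsync (loc s i) j ->
      step t w s (send (set_loc s i (set_pend (loc s i) (p1 ++ p2)))
                       [:: Pkt i j MProceed tg])
  | StCrash s i :
      ~~ crashed (loc s i) -> #|[pred j | crashed (loc s j)]| < t ->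
      step t w s (set_loc s i (set_crashed (loc s i) true)).

Inductive reachable (t : nat) (w : 'I_n) (v0 : V) : gstate -> Prop :=
  | ReachInit : reachable t w v0 (init_state v0)
  | ReachStep s s' : reachable t w v0 s -> step t w s s' -> reachable t w v0 s'.

Definition is_read_of (i : 'I_n) (r : nat) (p : packet) : bool :=
  if ptag p is TRead i' r' then (i' == i) && (r' == r) else false.
Definition is_write_of (k : nat) (p : packet) : bool :=
  if ptag p is TWrite k' then k' == k else false.

Definition is_write0 (m : msg) := if m is MWrite0 _ then true else false.
Definition is_write1 (m : msg) := if m is MWrite1 _ then true else false.
Definition is_read (m : msg) := if m is MRead then true else false.
Definition is_proceed (m : msg) := if m is MProceed then true else false.

End Model.

From mathcomp Require Import all_boot zify.
Set Implicit Arguments. Unset Strict Implicit. Unset Printing Implicit Defensive.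

(* The message-type claim holds by construction of [msg].  For the complexity
   claims, messages are attributed to operations by their tags.  The READ
   messages of the r-th read of p_i are sent once, by p_i at line (6), to the
   other n - 1 processes; a PROCEED is sent only when a pending READ is
   consumed, so there are no more PROCEEDs than READs.  For the k-th write we
   use a potential: a process broadcasts the k-th value (lines (2) and (iii))
   at most once, when its own w_sync reaches k, and sends a catch-up WRITE of
   sequence number k to p_j (line (iv)) only when its view w_sync[j] of p_j
   reaches k - 1; both events can happen once per process (resp. pair of
   processes), so at most n^2 + n^2 WRITE messages carry the tag k. *)

Lemma sum_upd n (A : Type) (F : 'I_n -> A -> nat) (L : 'I_n -> A) x (a : A) :
  \sum_(m < n) F m (upd L x a m) + F x (L x) = \sum_(m < n) F m (L m) + F x a.
Proof.
rewrite (bigD1 x) //= [in RHS](bigD1 x) //= /upd eqxx.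
rewrite (eq_bigr (fun m => F m (L m))); last by move=> m /negbTE ->.
lia.
Qed.

Lemma leq_nat_of_leq k a b : a <= b -> (k <= a : nat) <= (k <= b).
Proof. by move=> le_ab; case: (leqP k a) => // le_ka; rewrite (leq_trans le_ka). Qed.

Lemma leq_nat_of_leq_mulr k a b c : a <= b -> (k <= a) * c <= (k <= b) * c.
Proof. by move=> le_ab; rewrite leq_mul2r leq_nat_of_leq ?orbT. Qed.

Lemma count_eq0_of_all (T : Type) (a b : pred T) (s : seq T) :
  all a s -> (forall x, a x -> ~~ b x) -> count b s = 0.
Proof.
by move=> all_a ab; elim: s all_a => //= x s IH /andP[/ab /negbTE -> /IH ->].
Qed.

Section Potential.
Variables (V : Type) (n : nat).
Implicit Types (l : lstate V n) (k : nat).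

Definition write_potential k (i : 'I_n) l :=
  (k <= wsync l i) * n + \sum_(j < n) (k <= (wsync l j).+1).

Definition write_budget (s : gstate V n) k :=
  \sum_(i < n) write_potential k i (loc s i).

Lemma write_budget_le s k : write_budget s k <= 2 * n ^ 2.
Proof.
have pot_le i : write_potential k i (loc s i) <= n + n.
  rewrite leq_add //; first by rewrite -[X in _ <= X]mul1n leq_mul2r leq_b1 orbT.
  by rewrite -[X in _ <= X]card_ord -sum1_card leq_sum // => j _; rewrite leq_b1.
apply: (@leq_trans (\sum_(i < n) (n + n))); first exact: leq_sum.
by rewrite sum_nat_const card_ord; lia.
Qed.

Section Monotone.
Variables (l l' : lstate V n) (x : 'I_n).
Hypothesis wsync_le : forall j, wsync l j <= wsync l' j.

Lemma write_potential_mono k : write_potential k x l <= write_potential k x l'.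
Proof.
rewrite leq_add ?leq_nat_of_leq_mulr //.
by apply: leq_sum => j _; apply: leq_nat_of_leq; rewrite ltnS.
Qed.

Lemma write_potential_own k (c : bool) :
  (c -> (k <= wsync l' x) && ~~ (k <= wsync l x)) ->
  c * n + write_potential k x l <= write_potential k x l'.
Proof.
case: c => [/(_ isT) /andP[reached /negbTE fresh] | _]; last first.
  by rewrite add0n write_potential_mono.
rewrite /write_potential reached fresh mul1n add0n leq_add2l.
by apply: leq_sum => j _; apply: leq_nat_of_leq; rewrite ltnS.
Qed.

Lemma write_potential_peer k y (c : bool) :
  (c -> (k <= (wsync l' y).+1) && ~~ (k <= (wsync l y).+1)) ->
  c + write_potential k x l <= write_potential k x l'.
Proof.
case: c => [/(_ isT) /andP[reached /negbTE fresh] | _]; last first.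
  by rewrite add0n write_potential_mono.
rewrite /write_potential (bigD1 y) //= [X in _ <= _ + X](bigD1 y) //= reached fresh.
rewrite add0n add1n addnS ltnS leq_add ?leq_nat_of_leq_mulr //.
by apply: leq_sum => i _; apply: leq_nat_of_leq; rewrite ltnS.
Qed.

End Monotone.
End Potential.

Section Invariant.
Variables (V : Type) (n : nat).
Local Notation packet := (packet V n).
Local Notation lstate := (lstate V n).
Local Notation gstate := (gstate V n).
Implicit Types (P : pred (tag n)) (p : packet) (ps : seq packet).

Definition is_write_msg (m : msg V) := is_write0 m || is_write1 m.
Definition is_read_tag (tg : tag n) := if tg is TRead _ _ then true else false.
Definition is_write_tag (tg : tag n) := if tg is TWrite _ then true else false.
Definition read_tag (i : 'I_n) r (tg : tag n) :=
  if tg is TRead i' r' then (i' == i) && (r' == r) else false.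
Definition write_tag k (tg : tag n) := if tg is TWrite k' then k' == k else false.

Definition read_with P p := is_read (pmsg p) && P (ptag p).
Definition proceed_with P p := is_proceed (pmsg p) && P (ptag p).
Definition write_with P p := is_write_msg (pmsg p) && P (ptag p).

Definition well_tagged p :=
  (is_read (pmsg p) ==> is_read_tag (ptag p)) &&
  (is_write_msg (pmsg p) ==> is_write_tag (ptag p)).

Definition write_packet p := is_write_msg (pmsg p) && is_write_tag (ptag p).

Definition pending_read P (tk : task V n) :=
  if tk is PRead _ _ tg then P tg else false.
Definition pending_reads P (l : lstate) := count (pending_read P) (pend l).

Lemma count_by_type P ps :
  count (fun p => P (ptag p)) ps =
  count (read_with P) ps + count (proceed_with P) ps + count (write_with P) ps.
Proof.
elim: ps => //= -[src dst m tg] ps ->.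
by rewrite /read_with /proceed_with /write_with; case: m => *; case: (P tg) => /=; lia.
Qed.

(* [inv_proceed]: every READ ever sent is in transit, pending at its receiver,
   or has been answered by a single PROCEED with the same tag. *)
Record inv (s : gstate) : Prop := Inv {
  inv_well_tagged : all well_tagged (sent s);
  inv_proceed : forall P,
    count (read_with P) (net s) + \sum_(m < n) pending_reads P (loc s m) +
    count (proceed_with P) (sent s) <= count (read_with P) (sent s);
  inv_read : forall i r,
    count (read_with (read_tag i r)) (sent s) <= (r <= rsync (loc s i) i) * n;
  inv_write : forall k,
    count (write_with (write_tag k)) (sent s) <= write_budget s k }.

Lemma inv_update (s s' : gstate) x (l' : lstate) ps :
  inv s -> loc s' = upd (loc s) x l' -> sent s' = sent s ++ ps ->
  all well_tagged ps ->
  (forall P, count (read_with P) (net s') + pending_reads P l' +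
               count (proceed_with P) ps <=
             count (read_with P) (net s) + pending_reads P (loc s x) +
               count (read_with P) ps) ->
  (forall i r, count (read_with (read_tag i r)) ps + (r <= rsync (loc s i) i) * n <=
               (r <= rsync (upd (loc s) x l' i) i) * n) ->
  (forall k, count (write_with (write_tag k)) ps + write_potential k x (loc s x) <=
             write_potential k x l') ->
  inv s'.
Proof.
move=> [tagged proceed read write] loc' sent' ps_tagged ps_proceed ps_read ps_write.
split; rewrite sent' ?loc' ?all_cat ?tagged //.
- move=> P; move: (proceed P) (ps_proceed P); rewrite !count_cat.
  have := sum_upd (fun _ => pending_reads P) (loc s) x l'; lia.
- by move=> i r; move: (read i r) (ps_read i r); rewrite count_cat; lia.
- move=> k; move: (write k) (ps_write k); rewrite count_cat /write_budget loc'.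
  have := sum_upd (write_potential k) (loc s) x l'; lia.
Qed.

Lemma read_bound_update (L : 'I_n -> lstate) x (l' : lstate) ps :
  (forall i r, count (read_with (read_tag i r)) ps = 0) ->
  (forall j, rsync (L x) j <= rsync l' j) ->
  forall i r, count (read_with (read_tag i r)) ps + (r <= rsync (L i) i) * n <=
              (r <= rsync (upd L x l' i) i) * n.
Proof.
move=> no_reads rsync_le i r; rewrite no_reads add0n /upd.
by case: eqP => [->|_] //; apply: leq_nat_of_leq_mulr.
Qed.

Lemma inv_local (s : gstate) x (l' : lstate) :
  inv s -> wsync l' = wsync (loc s x) -> rsync l' = rsync (loc s x) ->
  pend l' = pend (loc s x) -> inv (set_loc s x l').
Proof.
move=> I ws rs pd; apply: (@inv_update s _ x l' [::] I) => //.
- by rewrite cats0.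
- by move=> P; rewrite /pending_reads pd /=; lia.
- by apply: read_bound_update => // j; rewrite rs.
- by move=> k; rewrite add0n write_potential_mono // => j; rewrite ws.
Qed.

Lemma write_packets_facts ps : all write_packet ps ->
  [/\ all well_tagged ps, forall P, count (read_with P) ps = 0 &
      forall P, count (proceed_with P) ps = 0].
Proof.
move=> ps_write; split.
- by apply: sub_all ps_write => -[? ? [?|?| |] [?|? ?]].
- by move=> P; apply: (count_eq0_of_all ps_write) => -[? ? [?|?| |] ?].
- by move=> P; apply: (count_eq0_of_all ps_write) => -[? ? [?|?| |] ?].
Qed.

Lemma is_write_msg_mkwrite b (v : V) : is_write_msg (mkwrite b v).
Proof. by case: b. Qed.

Lemma count_broadcast (a : pred packet) (f : 'I_n -> packet) (C : pred 'I_n)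
    (c : bool) :
  (forall j, a (f j) -> c) -> count a [seq f j | j <- enum 'I_n & C j] <= c * n.
Proof.
case: c => a_f; last first.
  by rewrite leqn0 count_map (count_eq0_of_all (all_predT _)) // => j _; apply/negP => /a_f.
rewrite mul1n (leq_trans (count_size _ _)) // size_map size_filter.
by rewrite -[X in _ <= X]size_enum_ord count_size.
Qed.

Lemma write_start_facts w (l : lstate) v :
  [/\ all write_packet (write_start w l v).2,
      rsync (write_start w l v).1 = rsync l,
      pend (write_start w l v).1 = pend l &
      forall k, count (write_with (write_tag k)) (write_start w l v).2 +
                write_potential k w l <= write_potential k w (write_start w l v).1].
Proof.
split => //.
  by rewrite all_map; apply/allP => j _; rewrite /write_packet /= is_write_msg_mkwrite.
move=> k; apply: leq_trans _ (write_potential_own (l := l) (c := (wsync l w).+1 == k) _ _).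
- by rewrite leq_add2r count_broadcast // => j /andP[].
- by move=> j; rewrite /= /upd; case: eqP => // ->.
- by move=> /eqP <-; rewrite /= /upd eqxx leqnn ltnn.
Qed.

Lemma write_body_facts i j v (l : lstate) :
  [/\ all write_packet (write_body i j v l).2,
      rsync (write_body i j v l).1 = rsync l,
      pend (write_body i j v l).1 = pend l &
      forall k, count (write_with (write_tag k)) (write_body i j v l).2 +
                write_potential k i l <= write_potential k i (write_body i j v l).1].
Proof.
rewrite /write_body; case: ifP => [/eqP [ws_ij] | _].
  split => //.
    by rewrite all_map; apply/allP => m _; rewrite /write_packet /= is_write_msg_mkwrite.
  move=> k; apply: leq_trans _ (write_potential_own (l := l) (c := (wsync l j).+1 == k) _ _).
  - by rewrite leq_add2r count_broadcast // => m /andP[].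
  - move=> m; rewrite /= /upd; case: eqP => [->|_] //; case: eqP => [->|_] //.
    by rewrite ws_ij.
  - by move=> /eqP <-; rewrite /= /upd eqxx; case: (i == j); rewrite ws_ij leqnn ltnn.
case: ifP => [_ | _]; split => //.
- by rewrite /= /write_packet is_write_msg_mkwrite.
- move=> k; rewrite /= /write_with /= is_write_msg_mkwrite addn0.
  apply: (write_potential_peer _ _ (y := j)).
    by move=> m; rewrite /= /upd; case: eqP => [->|].
  by move=> /eqP <-; rewrite /= /upd eqxx leqnn ltnn.
- move=> k; rewrite /= add0n write_potential_mono // => m.
  by rewrite /= /upd; case: eqP => [->|].
Qed.

Lemma read_start_facts i (l : lstate) :
  [/\ all well_tagged (read_start i l).2,
      forall P, count (proceed_with P) (read_start i l).2 = 0,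
      forall k, count (write_with (write_tag k)) (read_start i l).2 = 0,
      wsync (read_start i l).1 = wsync l /\ pend (read_start i l).1 = pend l &
      forall (L : 'I_n -> lstate), L i = l -> forall i' r,
        count (read_with (read_tag i' r)) (read_start i l).2 +
          (r <= rsync (L i') i') * n <=
        (r <= rsync (upd L i (read_start i l).1 i') i') * n].
Proof.
split => //.
- by rewrite all_map; apply/allP.
- by move=> P; rewrite count_map; apply: (count_eq0_of_all (all_predT _)).
- by move=> k; rewrite count_map; apply: (count_eq0_of_all (all_predT _)).
move=> L Li i' r; rewrite /read_start /=; case: (eqVneq i' i) => [->|ne]; last first.
  rewrite /upd (negbTE ne) -[X in _ <= X]add0n leq_add2r.
  apply: (@leq_trans (false * n)) => //.
  by rewrite count_broadcast // => m; rewrite /read_with /= eq_sym (negbTE ne).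
apply: (@leq_trans (((rsync l i).+1 == r) * n + (r <= rsync (L i) i) * n)).
  by rewrite leq_add2r count_broadcast // => m; rewrite /read_with /= eqxx.
rewrite Li /upd /= !eqxx /= eqxx.
case: (eqVneq (rsync l i).+1 r) => [<-|_]; first by rewrite ?eqxx ltnn leqnn mul0n addn0.
by rewrite add0n leq_nat_of_leq_mulr.
Qed.

Lemma pending_reads_receive P x p (l : lstate) :
  pending_reads P (receive x p l) <= pending_reads P l + read_with P p.
Proof.
rewrite /receive /pending_reads /read_with.
by case: p => src dst [u|u| |] tg /=; rewrite -?cats1 ?count_cat /= ?addn0.
Qed.

Lemma receive_sync x p (l : lstate) :
  wsync (receive x p l) = wsync l /\ forall j, rsync l j <= rsync (receive x p l) j.
Proof.
rewrite /receive; case: p => src dst [u|u| |] tg //=; split => // j.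
by rewrite /upd; case: eqP => [->|].
Qed.

Lemma step_inv t w (s s' : gstate) : inv s -> step t w s s' -> inv s'.
Proof.
move=> I st; case: st I => {}s.
- move=> v _ _ I.
  case: (write_start_facts w (loc s w) v) => /write_packets_facts[tg rd pr] rs pd wr.
  apply: (inv_update I) => //.
  + by move=> P; rewrite /= count_cat rd pr /pending_reads pd !addn0.
  + by apply: read_bound_update => // j; rewrite rs.
- by move=> wsn _ _ _ I; apply: inv_local.
- move=> i _ _ I.
  case: (read_start i (loc s i)) (read_start_facts i (loc s i)) => l' ps.
  case=> tg pr wr [ws pd] rd.
  apply: (inv_update I) => //.
  + by move=> P; rewrite /= count_cat pr /pending_reads pd addn0; lia.
  + exact: rd.
  + by move=> k; rewrite wr add0n write_potential_mono // => j; rewrite ws.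
- by move=> i rsn _ _ _ I; apply: inv_local.
- by move=> i sn _ _ _ I; apply: inv_local.
- move=> q1 p q2 net_s _ I.
  have [ws rs] := receive_sync (pdst p) p (loc s (pdst p)).
  apply: (@inv_update s _ (pdst p) _ [::] I) => //.
  + by rewrite cats0.
  + move=> P; have := pending_reads_receive P (pdst p) p (loc s (pdst p)).
    by rewrite /= net_s !count_cat /=; case: (read_with P p) => /=; lia.
  + exact: read_bound_update.
  + by move=> k; rewrite add0n write_potential_mono // => j; rewrite ws.
- move=> i p1 j b v p2 _ pend_i _ I.
  case: (write_body_facts i j v (set_pend (loc s i) (p1 ++ p2))).
  move=> /write_packets_facts[tg rd pr] rs pd wr.
  apply: (inv_update I) => //.
  + by move=> P; rewrite count_cat rd pr /pending_reads pd pend_i !count_cat /=; lia.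
  + by apply: read_bound_update => // j'; rewrite rs.
- move=> i p1 j sn tg p2 _ pend_i _ I.
  apply: (inv_update I) => //.
  + move=> P; rewrite count_cat /pending_reads pend_i !count_cat /= /proceed_with /read_with /=.
    by case: (P tg) => /=; lia.
  + exact: read_bound_update.
- by move=> i _ _ I; apply: inv_local.
Qed.

Lemma inv_init (v0 : V) : inv (init_state n v0).
Proof. by split => //= P; rewrite big1. Qed.

Lemma reachable_inv t w (v0 : V) (s : gstate) : reachable t w v0 s -> inv s.
Proof. by elim=> [|s1 s2 _ I /(step_inv I)]; [apply: inv_init|]. Qed.

Lemma read_messages_le (s : gstate) i r :
  inv s -> count (is_read_of i r) (sent s) <= 2 * n.
Proof.
case=> tagged proceed read _.
have no_write : count (write_with (read_tag i r)) (sent s) = 0.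
  by apply: (count_eq0_of_all tagged) => -[? ? [?|?| |] [?|? ?]].
have reads_le_n : count (read_with (read_tag i r)) (sent s) <= n.
  by rewrite (leq_trans (read i r)) // -[X in _ <= X]mul1n leq_mul2r leq_b1 orbT.
have := proceed (read_tag i r); rewrite (count_by_type (read_tag i r)) no_write; lia.
Qed.

Lemma write_messages_le (s : gstate) k :
  inv s -> count (is_write_of k) (sent s) <= 2 * n ^ 2.
Proof.
case=> tagged proceed _ write.
have no_read : count (read_with (write_tag k)) (sent s) = 0.
  by apply: (count_eq0_of_all tagged) => -[? ? [?|?| |] [?|? ?]].
have := proceed (write_tag k); have := write_budget_le s k; have := write k.
rewrite (count_by_type (write_tag k)) no_read; lia.
Qed.

End Invariant.

Theorem theorem2 :
  exists C : nat,
  forall (V : Type) (n t : nat) (w : 'I_n) (v0 : V),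
    2 * t < n ->
    forall s : gstate V n, reachable t w v0 s ->
      (* only the four message types are ever used *)
      all (fun p => [|| is_write0 (pmsg p), is_write1 (pmsg p),
                        is_read (pmsg p) | is_proceed (pmsg p)]) (sent s) /\
      (* a read operation requires O(n) messages *)
      (forall (i : 'I_n) (r : nat), count (is_read_of i r) (sent s) <= C * n) /\
      (* a write operation requires O(n^2) messages *)
      (forall k : nat, count (is_write_of k) (sent s) <= C * n ^ 2).
Proof.
(* The resilience bound 2t < n matters only for liveness. *)
exists 2 => V n t w v0 _ s reach_s; have inv_s := reachable_inv reach_s.
split; last split.
- by apply: sub_all (all_predT _) => -[? ? [?|?| |] ?].
- by move=> i r; apply: read_messages_le.
- by move=> k; apply: write_messages_le.
Qed.
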